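(* The set of singular points of the collinearity variety $\tilde{C}_P=0$ remains invariant under Euclidean motions, i.e. under maps $(\mathbf{k}'_1,\dots,\mathbf{k}'_6)\mapsto(\mathbf{R}\mathbf{k}'_1+\mathbf{t},\dots,\mathbf{R}\mathbf{k}'_6+\mathbf{t})$ with $\mathbf{R}\in SO(2)$ and $\mathbf{t}\in\mathbb{R}^2$. Moreover, a point of $\tilde{C}_P=0$ is a singular point if and only if $\mathbf{k}'_4=\mathbf{k}'_5=\mathbf{k}'_6$.
   Context: A configuration is $K'=(\mathbf{k}'_1,\dots,\mathbf{k}'_6)$ with $\mathbf{k}'_i=(c_i,d_i)^T\in\mathbb{R}^2$, viewed as a point of $\mathbb{R}^{12}$. The given base has anchor points $(0,0),(x_2,0),(x_3,y_3)$ with real design parameters $x_2\neq0$, $x_3$, $y_3$. Define $C_P=\det\begin{pmatrix}1&1&1\\ c_4&c_5&c_6\\ d_4&d_5&d_6\end{pmatrix}$, $E_B=\|\mathbf{k}'_2-\mathbf{k}'_1\|^2-x_2^2$, $F_1=(c_2-c_1)x_3+(d_1-d_2)y_3+(c_1-c_3)x_2$, $F_2=(d_2-d_1)x_3+(c_2-c_1)y_3+(d_1-d_3)x_2$. The variety $\tilde{C}_P=0$ is the common zero set of $C_P,E_B,F_1,F_2$ in $\mathbb{R}^{12}$ (configurations with collinear platform points whose base is a Euclidean image of the given base). A singular point of $\tilde{C}_P=0$ is a point of it at which the gradients of $C_P,E_B,F_1,F_2$ with respect to $c_1,\dots,c_6,d_1,\dots,d_6$ are linearly dependent. *)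

From mathcomp Require Import all_boot all_order all_algebra.
From mathcomp Require Import mpoly.
Set Implicit Arguments. Unset Strict Implicit. Unset Printing Implicit Defensive.
Import Order.TTheory GRing.Theory Num.Theory.
Local Open Scope ring_scope.

Section Collinearity.
Variable R : realFieldType.

(* Coordinates of R^12 = (c_1,...,c_6,d_1,...,d_6): c_k is coordinate k-1,
   d_k is coordinate 6+k-1 (k = 1..6, one-based as in the paper). *)
Definition cI (k : nat) : 'I_12 := inord k.-1.
Definition dI (k : nat) : 'I_12 := inord (6 + k.-1).

Definition Pc (k : nat) : {mpoly R[12]} := 'X_(cI k).
Definition Pd (k : nat) : {mpoly R[12]} := 'X_(dI k).

Definition CP : {mpoly R[12]} :=
  \det (\matrix_(i < 3, j < 3)
          (if i == 0 :> nat then 1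
           else if i == 1 :> nat then Pc (j + 4) else Pd (j + 4))).

Definition EB (x2 : R) : {mpoly R[12]} :=
  (Pc 2 - Pc 1) ^+ 2 + (Pd 2 - Pd 1) ^+ 2 - (x2 ^+ 2)%:MP.

Definition F1 (x2 x3 y3 : R) : {mpoly R[12]} :=
  (Pc 2 - Pc 1) * x3%:MP + (Pd 1 - Pd 2) * y3%:MP + (Pc 1 - Pc 3) * x2%:MP.

Definition F2 (x2 x3 y3 : R) : {mpoly R[12]} :=
  (Pd 2 - Pd 1) * x3%:MP + (Pc 2 - Pc 1) * y3%:MP + (Pd 1 - Pd 3) * x2%:MP.

Definition ev (p : {mpoly R[12]}) (K : 'rV[R]_12) : R := p.@[fun j => K 0 j].

Definition grad (p : {mpoly R[12]}) (K : 'rV[R]_12) : 'rV[R]_12 :=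
  \row_(j < 12) ev (mderiv j p) K.

Definition on_CPt (x2 x3 y3 : R) (K : 'rV[R]_12) : Prop :=
  [/\ ev CP K = 0, ev (EB x2) K = 0, ev (F1 x2 x3 y3) K = 0 & ev (F2 x2 x3 y3) K = 0].

Definition singular_CPt (x2 x3 y3 : R) (K : 'rV[R]_12) : Prop :=
  on_CPt x2 x3 y3 K /\
  exists a1 a2 a3 a4 : R, ~ (a1 = 0 /\ a2 = 0 /\ a3 = 0 /\ a4 = 0) /\
    a1 *: grad CP K + a2 *: grad (EB x2) K + a3 *: grad (F1 x2 x3 y3) K
      + a4 *: grad (F2 x2 x3 y3) K = 0.

Definition SO2 (Q : 'M[R]_2) : Prop := Q^T *m Q = 1%:M /\ \det Q = 1.

Definition kpt (K : 'rV[R]_12) (k : nat) : 'cV[R]_2 :=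
  \col_(i < 2) (if i == 0 :> nat then K 0 (cI k) else K 0 (dI k)).

Definition motion (Q : 'M[R]_2) (t : 'cV[R]_2) (K : 'rV[R]_12) : 'rV[R]_12 :=
  \row_(j < 12)
    (if (j < 6)%N then (Q *m kpt K j.+1 + t) 0 0
     else (Q *m kpt K (j - 5)%N + t) 1 0).

End Collinearity.

(* Only grad F_1 and grad F_2 involve c_3 and d_3 (each through the factor -x_2), so
   in a linear dependence of the four gradients their coefficients vanish.  In the
   c_2, d_2 directions what remains is the coefficient of grad E_B times
   2(k'_2 - k'_1), and |k'_2 - k'_1| = |x_2| <> 0 on the variety, so that coefficient
   vanishes too.  Hence a point is singular iff grad C_P = 0, i.e. iff
   k'_4 = k'_5 = k'_6.  A motion k |-> Rk + t multiplies C_P by det R = 1, keeps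
   |k'_2 - k'_1|, maps the vector (F_1, F_2) to R (F_1, F_2), and keeps
   k'_4 = k'_5 = k'_6; its inverse is again a motion. *)

From mathcomp Require Import all_boot all_order all_algebra.
From mathcomp Require Import mpoly ring lra zify.
Import Order.TTheory GRing.Theory Num.Theory.
Set Implicit Arguments. Unset Strict Implicit. Unset Printing Implicit Defensive.
Local Open Scope ring_scope.

Local Notation c K k := (K 0 (cI k)).
Local Notation d K k := (K 0 (dI k)).

Lemma mderivXU (R : comNzRingType) n (i j : 'I_n) :
  ('X_i : {mpoly R[n]})^`M(j) = (i == j)%:R%:MP.
Proof.
rewrite mderivX mnm1E; case: eqP => [->|_]; last by rewrite scale0r mpolyC0.
by rewrite -{1}[U_(j)%MM]add0m addmK mpolyX0 scale1r mpolyC1.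
Qed.

Lemma det_mx22 (T : comNzRingType) (A : 'M[T]_2) :
  \det A = A 0 0 * A 1 1 - A 0 1 * A 1 0.
Proof.
rewrite (expand_det_row _ 0) !big_ord_recl big_ord0 /cofactor !det_mx11 !mxE /=.
have -> : lift ord0 ord0 = 1 :> 'I_2 by apply: val_inj.
have -> : lift 1 0 = 0 :> 'I_2 by apply: val_inj.
by rewrite addr0 expr0 expr1 !mul1r mulN1r mulrN.
Qed.

Lemma mulmx_cV2E (T : pzRingType) (A : 'M[T]_2) (v : 'cV[T]_2) i :
  (A *m v) i 0 = A i 0 * v 0 0 + A i 1 * v 1 0.
Proof.
rewrite mxE !big_ord_recl big_ord0 addr0.
by have -> : lift ord0 ord0 = 1 :> 'I_2 by apply: val_inj.
Qed.

Lemma det_mx33 (T : comNzRingType) (A : 'M[T]_3) :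
  \det A = A 0 0 * (A 1 1 * A 2 2 - A 1 2 * A 2 1)
         - A 0 1 * (A 1 0 * A 2 2 - A 1 2 * A 2 0)
         + A 0 2 * (A 1 0 * A 2 1 - A 1 1 * A 2 0).
Proof.
pose a (i j : nat) := A (inord i) (inord j).
have aE i j : A i j = a i j by rewrite /a !inord_val.
rewrite (expand_det_row _ 0) !big_ord_recl big_ord0 /cofactor.
rewrite !(expand_det_row _ 0) !big_ord_recl !big_ord0 /cofactor !det_mx11 !mxE.
by rewrite !aE /a /=; ring.
Qed.

Lemma val_cI k : (0 < k < 7)%N -> cI k = k.-1 :> nat.
Proof. by move=> hk; rewrite /cI inordK //; lia. Qed.

Lemma val_dI k : (0 < k < 7)%N -> dI k = (6 + k.-1)%N :> nat.
Proof. by move=> hk; rewrite /dI inordK //; lia. Qed.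

Lemma eq_cI k l : (0 < k < 7)%N -> (0 < l < 7)%N -> (cI k == cI l) = (k == l).
Proof. by move=> hk hl; rewrite -val_eqE /= !val_cI //; apply/eqP/eqP; lia. Qed.

Lemma eq_dI k l : (0 < k < 7)%N -> (0 < l < 7)%N -> (dI k == dI l) = (k == l).
Proof. by move=> hk hl; rewrite -val_eqE /= !val_dI //; apply/eqP/eqP; lia. Qed.

Lemma eq_cI_dI k l : (0 < k < 7)%N -> (0 < l < 7)%N -> (cI k == dI l) = false.
Proof. by move=> hk hl; rewrite -val_eqE /= val_cI ?val_dI //; apply/eqP; lia. Qed.

Lemma eq_dI_cI k l : (0 < k < 7)%N -> (0 < l < 7)%N -> (dI k == cI l) = false.
Proof. by move=> hk hl; rewrite eq_sym eq_cI_dI. Qed.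

Definition eq_coordE := (eq_cI, eq_dI, eq_cI_dI, eq_dI_cI).

Lemma ord12_cI_dI (j : 'I_12) :
  exists2 k, (0 < k < 7)%N & j = cI k \/ j = dI k.
Proof.
have := ltn_ord j; case: (ltnP j 6) => hj hj12.
  by exists j.+1; [lia | left; apply: val_inj; rewrite /= val_cI //; lia].
by exists (j - 5)%N; [lia | right; apply: val_inj; rewrite /= val_dI //; lia].
Qed.

Section Polynomials.
Context {R : realFieldType}.
Implicit Types K : 'rV[R]_12.

Lemma CPE : CP R = Pc R 5 * Pd R 6 - Pc R 6 * Pd R 5
  - (Pc R 4 * Pd R 6 - Pc R 6 * Pd R 4) + (Pc R 4 * Pd R 5 - Pc R 5 * Pd R 4).
Proof. by rewrite /CP det_mx33 !mxE /= !mul1r. Qed.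

Local Ltac mpoly_eval := rewrite /ev /Pc /Pd ?expr2
  !(mevalD, mevalB, mevalM, mevalN, mevalXU, mevalC).
Local Ltac mpoly_deriv := rewrite /Pc /Pd ?expr2
  !(mderivD, mderivB, mderivM, mderivN, mderivXU, mderivC).

Lemma ev_CP K : ev (CP R) K = c K 5 * d K 6 - c K 6 * d K 5
  - (c K 4 * d K 6 - c K 6 * d K 4) + (c K 4 * d K 5 - c K 5 * d K 4).
Proof. by rewrite CPE; mpoly_eval. Qed.

Lemma ev_EB x2 K :
  ev (EB x2) K = (c K 2 - c K 1) ^+ 2 + (d K 2 - d K 1) ^+ 2 - x2 ^+ 2.
Proof. by rewrite /EB; mpoly_eval; rewrite -!expr2. Qed.

Lemma ev_F1 x2 x3 y3 K : ev (F1 x2 x3 y3) K =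
  (c K 2 - c K 1) * x3 + (d K 1 - d K 2) * y3 + (c K 1 - c K 3) * x2.
Proof. by rewrite /F1; mpoly_eval. Qed.

Lemma ev_F2 x2 x3 y3 K : ev (F2 x2 x3 y3) K =
  (d K 2 - d K 1) * x3 + (c K 2 - c K 1) * y3 + (d K 1 - d K 3) * x2.
Proof. by rewrite /F2; mpoly_eval. Qed.

Local Notation dc k j := ((cI k == j)%:R : R).
Local Notation dd k j := ((dI k == j)%:R : R).

Lemma grad_CP K j : grad (CP R) K 0 j =
    dc 5 j * d K 6 + c K 5 * dd 6 j - (dc 6 j * d K 5 + c K 6 * dd 5 j)
  - (dc 4 j * d K 6 + c K 4 * dd 6 j - (dc 6 j * d K 4 + c K 6 * dd 4 j))
  + (dc 4 j * d K 5 + c K 4 * dd 5 j - (dc 5 j * d K 4 + c K 5 * dd 4 j)).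
Proof. by rewrite mxE CPE; mpoly_deriv; mpoly_eval. Qed.

Lemma grad_EB x2 K j : grad (EB x2) K 0 j =
  2 * (c K 2 - c K 1) * (dc 2 j - dc 1 j) + 2 * (d K 2 - d K 1) * (dd 2 j - dd 1 j).
Proof. by rewrite mxE /EB; mpoly_deriv; mpoly_eval; ring. Qed.

Lemma grad_F1 x2 x3 y3 K j : grad (F1 x2 x3 y3) K 0 j =
  (dc 2 j - dc 1 j) * x3 + (dd 1 j - dd 2 j) * y3 + (dc 1 j - dc 3 j) * x2.
Proof. by rewrite mxE /F1; mpoly_deriv; mpoly_eval; ring. Qed.

Lemma grad_F2 x2 x3 y3 K j : grad (F2 x2 x3 y3) K 0 j =
  (dd 2 j - dd 1 j) * x3 + (dc 2 j - dc 1 j) * y3 + (dd 1 j - dd 3 j) * x2.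
Proof. by rewrite mxE /F2; mpoly_deriv; mpoly_eval; ring. Qed.

End Polynomials.

Lemma lincomb4E (T : comNzRingType) n (g1 g2 g3 g4 : 'rV[T]_n) a1 a2 a3 a4 j :
  (a1 *: g1 + a2 *: g2 + a3 *: g3 + a4 *: g4) 0 j
  = a1 * g1 0 j + a2 * g2 0 j + a3 * g3 0 j + a4 * g4 0 j.
Proof. by rewrite !mxE. Qed.

Section Singular.
Context {R : realFieldType}.
Implicit Types K : 'rV[R]_12.

Lemma kpt_eq K k l :
  kpt K k = kpt K l <-> c K k = c K l /\ d K k = d K l.
Proof.
split=> [e | [ec ed]]; last by apply/colP => i; rewrite !mxE ec ed.
by split; [move/colP/(_ 0): e | move/colP/(_ 1): e]; rewrite !mxE.
Qed.

Lemma grad_CP_eq0 K :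
  grad (CP R) K = 0 <-> kpt K 4 = kpt K 5 /\ kpt K 5 = kpt K 6.
Proof.
rewrite !kpt_eq; split=> [g0 | [[c45 d45] [c56 d56]]].
  have gE j : grad (CP R) K 0 j = 0 by rewrite g0 mxE.
  have := gE (cI 4); have := gE (cI 5); have := gE (dI 4); have := gE (dI 5).
  rewrite !grad_CP !eq_coordE //=.
  by move=> *; split; split; lra.
by apply/rowP => j; rewrite grad_CP mxE c45 c56 d45 d56; ring.
Qed.

Variables (x2 x3 y3 : R).
Hypothesis x2_neq0 : x2 != 0.

Lemma grad_dependence K a1 a2 a3 a4 : on_CPt x2 x3 y3 K ->
  a1 *: grad (CP R) K + a2 *: grad (EB x2) K + a3 *: grad (F1 x2 x3 y3) K
    + a4 *: grad (F2 x2 x3 y3) K = 0 ->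
  [/\ a2 = 0, a3 = 0 & a4 = 0].
Proof.
case=> _ EB0 _ _ comb0; rewrite ev_EB in EB0.
have combE j : a1 * grad (CP R) K 0 j + a2 * grad (EB x2) K 0 j
    + a3 * grad (F1 x2 x3 y3) K 0 j + a4 * grad (F2 x2 x3 y3) K 0 j = 0.
  by rewrite -lincomb4E comb0 mxE.
move: (combE (cI 3)) (combE (dI 3)) (combE (cI 2)) (combE (dI 2)) => {combE comb0}.
rewrite 4!grad_CP 4!grad_EB 4!grad_F1 4!grad_F2 !eq_coordE //= => e_c3 e_d3 e_c2 e_d2.
have a30 : a3 = 0 by apply: (mulIf x2_neq0); rewrite mul0r; lra.
have a40 : a4 = 0 by apply: (mulIf x2_neq0); rewrite mul0r; lra.
subst a3 a4; split=> //.
have a2c : a2 * (c K 2 - c K 1) = 0 by lra.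
have a2d : a2 * (d K 2 - d K 1) = 0 by lra.
apply: (mulIf (expf_neq0 2 x2_neq0)); rewrite mul0r.
have -> : x2 ^+ 2 = (c K 2 - c K 1) ^+ 2 + (d K 2 - d K 1) ^+ 2 by lra.
transitivity ((c K 2 - c K 1) * (a2 * (c K 2 - c K 1))
              + (d K 2 - d K 1) * (a2 * (d K 2 - d K 1))); first by ring.
by rewrite a2c a2d !mulr0 addr0.
Qed.

Lemma singular_CPtE K : on_CPt x2 x3 y3 K ->
  singular_CPt x2 x3 y3 K <-> kpt K 4 = kpt K 5 /\ kpt K 5 = kpt K 6.
Proof.
move=> onK; rewrite -grad_CP_eq0; split=> [[_ [a1 [a2 [a3 [a4 [nz comb0]]]]]] | g0].
  have [a20 a30 a40] := grad_dependence onK comb0.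
  move: comb0; rewrite a20 a30 a40 !scale0r !addr0 => /eqP.
  rewrite scaler_eq0 => /orP [/eqP a10 | /eqP //].
  by case: nz.
split=> //; exists 1, 0, 0, 0; split; first by case=> /eqP; rewrite oner_eq0.
by rewrite g0 !scale0r !addr0 scaler0.
Qed.

End Singular.

Section Motion.
Context {R : realFieldType}.
Implicit Types (K : 'rV[R]_12) (Q : 'M[R]_2) (t : 'cV[R]_2).

Lemma kpt_motion Q t K k : (0 < k < 7)%N -> kpt (motion Q t K) k = Q *m kpt K k + t.
Proof.
move=> hk; apply/colP => i.
have [->|->] : i = 0 \/ i = 1 by case: i => -[|[|//]] hi; [left | right]; apply: val_inj.
(* [cI] and [dI] only depend on [k.-1], so the reindexed point is convertible to [kpt K k]. *)
- by rewrite [LHS]mxE /= /motion mxE val_cI // ifT //; lia.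
- by rewrite [LHS]mxE /= /motion mxE val_dI.
Qed.

Lemma motion_cI Q t K k : (0 < k < 7)%N ->
  motion Q t K 0 (cI k) = Q 0 0 * K 0 (cI k) + Q 0 1 * K 0 (dI k) + t 0 0.
Proof.
move=> hk; have /colP/(_ 0) := kpt_motion Q t K hk.
by rewrite [LHS]mxE [RHS]mxE mulmx_cV2E !mxE.
Qed.

Lemma motion_dI Q t K k : (0 < k < 7)%N ->
  motion Q t K 0 (dI k) = Q 1 0 * K 0 (cI k) + Q 1 1 * K 0 (dI k) + t 1 0.
Proof.
move=> hk; have /colP/(_ 1) := kpt_motion Q t K hk.
by rewrite [LHS]mxE [RHS]mxE mulmx_cV2E !mxE.
Qed.

Lemma kpt_inj K K' : (forall k, (0 < k < 7)%N -> kpt K k = kpt K' k) -> K = K'.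
Proof.
move=> eqK; apply/rowP => j; have [k hk [->|->]] := ord12_cI_dI j.
- by have /colP/(_ 0) := eqK k hk; rewrite !mxE.
- by have /colP/(_ 1) := eqK k hk; rewrite !mxE.
Qed.

Lemma motion_comp Q t Q' t' K :
  motion Q t (motion Q' t' K) = motion (Q *m Q') (Q *m t' + t) K.
Proof.
by apply: kpt_inj => k hk; rewrite !kpt_motion // mulmxDr mulmxA addrA.
Qed.

Lemma motion_id K : motion 1%:M 0 K = K.
Proof. by apply: kpt_inj => k hk; rewrite kpt_motion // mul1mx addr0. Qed.

Lemma SO2_tr Q : SO2 Q -> SO2 Q^T.
Proof. by case=> orthQ detQ; split; rewrite ?det_tr // trmxK; apply: mulmx1C. Qed.

Lemma SO2_rotation Q : SO2 Q -> Q 1 1 = Q 0 0 /\ Q 0 1 = - Q 1 0.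
Proof.
case=> orthQ detQ.
have adjQ : \adj Q = Q^T.
  by rewrite -[\adj Q]mul1mx -orthQ -mulmxA mul_mx_adj detQ mulmx1.
have /matrixP adjE := adjQ.
have := adjE 0 0; have := adjE 1 0.
rewrite !mxE /cofactor !det_mx11 !mxE /=.
have -> : lift 0 0 = 1 :> 'I_2 by apply: val_inj.
have -> : lift 1 0 = 0 :> 'I_2 by apply: val_inj.
by rewrite expr0 expr1 mul1r mulN1r => <- <-.
Qed.

Section Invariance.
Variables (x2 x3 y3 : R).

Lemma ev_CP_motion Q t K : ev (CP R) (motion Q t K) = \det Q * ev (CP R) K.
Proof. by rewrite !ev_CP !motion_cI // !motion_dI // det_mx22; ring. Qed.

Lemma ev_EB_kpt K : ev (EB x2) K =
  ((kpt K 2 - kpt K 1)^T *m (kpt K 2 - kpt K 1)) 0 0 - x2 ^+ 2.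
Proof.
by rewrite ev_EB mxE !big_ord_recl big_ord0 addr0 !mxE /= -!expr2.
Qed.

Lemma ev_EB_motion Q t K : Q^T *m Q = 1%:M ->
  ev (EB x2) (motion Q t K) = ev (EB x2) K.
Proof.
move=> orthQ; rewrite !ev_EB_kpt !kpt_motion // opprD addrACA subrr addr0.
by rewrite -mulmxBr trmx_mul mulmxA -(mulmxA _ Q^T) orthQ mulmx1.
Qed.

Lemma ev_F1_motion Q t K : Q 1 1 = Q 0 0 -> Q 0 1 = - Q 1 0 ->
  ev (F1 x2 x3 y3) (motion Q t K) = Q 0 0 * ev (F1 x2 x3 y3) K + Q 0 1 * ev (F2 x2 x3 y3) K.
Proof.
by move=> Q11 Q01; rewrite !ev_F1 ev_F2 !motion_cI // !motion_dI // Q11 Q01; ring.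
Qed.

Lemma ev_F2_motion Q t K : Q 1 1 = Q 0 0 -> Q 0 1 = - Q 1 0 ->
  ev (F2 x2 x3 y3) (motion Q t K) = Q 1 0 * ev (F1 x2 x3 y3) K + Q 1 1 * ev (F2 x2 x3 y3) K.
Proof.
by move=> Q11 Q01; rewrite ev_F1 !ev_F2 !motion_cI // !motion_dI // Q11 Q01; ring.
Qed.

Lemma on_CPt_motion Q t K : SO2 Q -> on_CPt x2 x3 y3 K -> on_CPt x2 x3 y3 (motion Q t K).
Proof.
move=> SO2Q [CP0 EB0 F10 F20]; have [Q11 Q01] := SO2_rotation SO2Q.
split; first by rewrite ev_CP_motion CP0 mulr0.
- by rewrite ev_EB_motion //; case: SO2Q.
- by rewrite ev_F1_motion // F10 F20 !mulr0 addr0.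
- by rewrite ev_F2_motion // F10 F20 !mulr0 addr0.
Qed.

Lemma kpt456_motion Q t K :
  kpt K 4 = kpt K 5 /\ kpt K 5 = kpt K 6 ->
  kpt (motion Q t K) 4 = kpt (motion Q t K) 5 /\ kpt (motion Q t K) 5 = kpt (motion Q t K) 6.
Proof. by rewrite !kpt_motion // => -[-> ->]. Qed.

Hypothesis x2_neq0 : x2 != 0.

Lemma singular_CPt_motion Q t K : SO2 Q ->
  singular_CPt x2 x3 y3 K -> singular_CPt x2 x3 y3 (motion Q t K).
Proof.
move=> SO2Q singK; have onK := singK.1.
have onQK := on_CPt_motion t SO2Q onK.
by apply/(singular_CPtE x2_neq0 onQK)/kpt456_motion/(singular_CPtE x2_neq0 onK).
Qed.

End Invariance.
End Motion.

Theorem theorem9 (R : realFieldType) (x2 x3 y3 : R) (hx2 : x2 != 0) :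
  (forall (Q : 'M[R]_2) (t : 'cV[R]_2), SO2 Q ->
     (forall K, singular_CPt x2 x3 y3 K -> singular_CPt x2 x3 y3 (motion Q t K)) /\
     (forall K', singular_CPt x2 x3 y3 K' ->
        exists K, singular_CPt x2 x3 y3 K /\ motion Q t K = K')) /\
  (forall K : 'rV[R]_12, on_CPt x2 x3 y3 K ->
     (singular_CPt x2 x3 y3 K <-> (kpt K 4 = kpt K 5 /\ kpt K 5 = kpt K 6))).
Proof.
split=> [Q t SO2Q | K]; last exact: singular_CPtE.
split=> [K | K' singK']; first exact: singular_CPt_motion.
exists (motion Q^T (- (Q^T *m t)) K'); split.
  exact: singular_CPt_motion (SO2_tr SO2Q) singK'.
have QQt : Q *m Q^T = 1%:M by apply: mulmx1C; case: SO2Q.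
by rewrite motion_comp QQt mulmxN mulmxA QQt mul1mx addNr motion_id.
Qed.
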